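(* Let $\lambda$ be a partition of $n$ and $\lambda'$ its conjugate. Let $B_\lambda\times 1\subseteq[n]\times[n]$ and $B_{\lambda'}\subseteq[n]\times[n]$ be the Ferrers boards defined in the context. Then the complement $([n]\times[n])\setminus(B_\lambda\times 1)$, rotated by $180^\circ$ (i.e. under the map $(i,j)\mapsto(n+1-i,\,n+1-j)$), equals $B_{\lambda'}$.
   Context: Partitions are drawn as diagrams in French convention (rows counted from bottom to top, row $j$ has $\lambda_j$ left-justified boxes); the box in column $i$ and row $j$ is $(i,j)$ and its content is $c(i,j)=i-j$. For a partition $\lambda$ of $n$, list the contents of its $n$ boxes in weakly decreasing order $c_1\ge c_2\ge\cdots\ge c_n$. The board $B_\lambda\subseteq[n]\times[n]$ (viewed as an $n\times n$ array of squares $(i,j)$, column $i$, row $j$) is the Ferrers board whose $i$-th column consists of the squares $(i,j)$ with $1\le j\le c_i+i-1$ (so column $i$ has height $c_i+i-1$). The board $B_\lambda\times 1$ is obtained by increasing the height of every column by one, i.e. its $i$-th column has height $c_i+i$. *)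

From mathcomp Require Import all_boot all_order all_algebra.
Set Implicit Arguments. Unset Strict Implicit. Unset Printing Implicit Defensive.
Import Order.TTheory GRing.Theory Num.Theory.

Definition is_partition (n : nat) (l : seq nat) : bool :=
  [&& sorted geq l, all (fun x => 0 < x) l & sumn l == n].

Definition conj_part (l : seq nat) : seq nat :=
  mkseq (fun k => count (fun p => k < p) l) (head 0 l).

(* boxes (i,j) = (column, row), 1-indexed, French convention *)
Definition boxes (l : seq nat) : seq (nat * nat) :=
  flatten [seq [seq (i.+1, j.+1) | i <- iota 0 (nth 0 l j)] | j <- iota 0 (size l)].

Definition content (b : nat * nat) : int := (b.1%:Z - b.2%:Z)%R.

Definition sorted_contents (l : seq nat) : seq int :=
  sort (fun x y : int => (y <= x)%R) [seq content b | b <- boxes l].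

Definition cont (l : seq nat) (i : nat) : int := nth 0%R (sorted_contents l) i.-1.

Definition in_board (n : nat) (l : seq nat) (p : nat * nat) : bool :=
  [&& 1 <= p.1 <= n, 1 <= p.2 <= n & (p.2%:Z <= cont l p.1 + p.1%:Z - 1)%R].

Definition in_board_x1 (n : nat) (l : seq nat) (p : nat * nat) : bool :=
  [&& 1 <= p.1 <= n, 1 <= p.2 <= n & (p.2%:Z <= cont l p.1 + p.1%:Z)%R].

From mathcomp Require Import all_boot all_order all_algebra.
From mathcomp Require Import zify.
Import Order.TTheory GRing.Theory Num.Theory.

(* Transposing the diagram of [l] gives the diagram of [conj_part l], and
   transposition negates contents; hence the decreasing content sequence of
   [conj_part l] is the reversed negated one of [l], c'_i = - c_(n+1-i).  The
   column heights then satisfy (c'_i + i - 1) + (c_(n+1-i) + (n+1-i)) = n, which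
   is exactly the statement that the rotated complement of B_l x 1 is B_l'. *)

Lemma sorted_geq_le_head (l : seq nat) :
  sorted geq l -> all (fun p => p <= head 0 l) l.
Proof.
case: l => //= x s Hl; rewrite leqnn.
by apply: order_path_min Hl => a b c /= Hba Hcb; apply: leq_trans Hcb Hba.
Qed.

Lemma sorted_geq_nth_le_head {l : seq nat} m :
  sorted geq l -> nth 0 l m <= head 0 l.
Proof.
move=> /sorted_geq_le_head /allP Hl.
by case: (ltnP m (size l)) => Hm; [apply: Hl; apply: mem_nth | rewrite nth_default].
Qed.

Lemma count_gt_head (l : seq nat) k :
  sorted geq l -> head 0 l <= k -> count (fun p => k < p) l = 0.
Proof.
move=> /sorted_geq_le_head /allP Hl Hk.
rewrite (@eq_in_count _ _ pred0) ?count_pred0 // => p /Hl Hp.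
by apply/negbTE; rewrite -leqNgt (leq_trans Hp Hk).
Qed.

Lemma sorted_geq_nth_count (l : seq nat) k m :
  sorted geq l -> (k < nth 0 l m) = (m < count (fun p => k < p) l).
Proof.
elim: l m => [|x s IH] m Hl; first by rewrite nth_nil.
case: (ltnP k x) => Hkx.
  case: m => [|m] /=; first by rewrite Hkx.
  by rewrite IH ?(path_sorted Hl) // Hkx add1n ltnS.
rewrite count_gt_head // ltn0; apply/negbTE; rewrite -leqNgt.
exact: leq_trans (sorted_geq_nth_le_head m Hl) Hkx.
Qed.

Lemma nth_conj_part (l : seq nat) k :
  sorted geq l -> nth 0 (conj_part l) k = count (fun p => k < p) l.
Proof.
move=> Hl; case: (ltnP k (head 0 l)) => Hk; first by rewrite nth_mkseq.
by rewrite nth_default ?size_mkseq // count_gt_head.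
Qed.

Lemma mem_boxes (l : seq nat) (a b : nat) :
  ((a, b) \in boxes l) = [&& 0 < a, 0 < b & a.-1 < nth 0 l b.-1].
Proof.
apply/flattenP/idP.
  case=> s /mapP [j]; rewrite mem_iota add0n => _ -> /mapP [i].
  by rewrite mem_iota add0n => Hi [-> ->].
case/and3P=> Ha Hb Hab.
have Hs : b.-1 < size l by rewrite ltnNge; apply: contraL Hab => /(nth_default 0) ->.
exists [seq (i.+1, b.-1.+1) | i <- iota 0 (nth 0 l b.-1)].
  by apply/mapP; exists b.-1; rewrite // mem_iota add0n.
apply/mapP; exists a.-1; first by rewrite mem_iota add0n.
by rewrite !prednK.
Qed.

Lemma uniq_flatten_rows (f : nat -> nat) (m k : nat) :
  uniq (flatten [seq [seq (i.+1, j.+1) | i <- iota 0 (f j)] | j <- iota m k]).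
Proof.
elim: k m => [|k IH] m //=.
rewrite cat_uniq IH andbT map_inj_uniq ?iota_uniq; last by move=> x y [].
apply/hasPn => p /flattenP [s /mapP [j]].
rewrite mem_iota => /andP [Hmj _] -> /mapP [i _ ->].
by apply/mapP => -[i' _ [_ Ejm]]; move: Hmj; rewrite Ejm ltnn.
Qed.

Lemma uniq_boxes (l : seq nat) : uniq (boxes l).
Proof. exact: uniq_flatten_rows. Qed.

Lemma size_boxes (l : seq nat) : size (boxes l) = sumn l.
Proof.
rewrite size_flatten /shape -map_comp.
rewrite (eq_map (g := nth 0 l)) => [|j /=]; last by rewrite size_map size_iota.
by rewrite -/(mkseq _ _) mkseq_nth.
Qed.

Lemma mem_boxes_conj_part (l : seq nat) (a b : nat) :
  sorted geq l -> ((a, b) \in boxes (conj_part l)) = ((b, a) \in boxes l).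
Proof.
by move=> Hl; rewrite !mem_boxes nth_conj_part // -sorted_geq_nth_count // andbCA.
Qed.

Lemma perm_boxes_conj_part (l : seq nat) :
  sorted geq l -> perm_eq (boxes (conj_part l)) [seq (b.2, b.1) | b <- boxes l].
Proof.
move=> Hl; apply: uniq_perm; rewrite ?uniq_boxes ?map_inj_uniq ?uniq_boxes //.
  by move=> [x1 y1] [x2 y2] [-> ->].
move=> [a b]; rewrite mem_boxes_conj_part //.
by apply/idP/mapP => [Hba | [[x y] Hxy [-> ->]] //]; exists (b, a).
Qed.

Section Contents.
Local Open Scope ring_scope.

Lemma content_swap (b : nat * nat) : content (b.2, b.1) = - content b.
Proof. by rewrite /content opprB. Qed.

Lemma sort_ge_opp (R : realDomainType) (s : seq R) :
  sort >=%O [seq - x | x <- s] = [seq - x | x <- rev (sort >=%O s)].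
Proof.
apply: (sorted_eq ge_trans ge_anti); first exact/sort_sorted/ge_total.
  rewrite sorted_map rev_sorted.
  by apply: sub_sorted (sort_sorted (@ge_total _ R) s) => x y; rewrite /= lerN2.
by rewrite perm_sort map_rev perm_sym perm_rev perm_map // perm_sort.
Qed.

Lemma size_sorted_contents (l : seq nat) : size (sorted_contents l) = sumn l.
Proof. by rewrite size_sort size_map size_boxes. Qed.

Lemma perm_contents_conj_part (l : seq nat) : sorted geq l ->
  perm_eq [seq content b | b <- boxes (conj_part l)] [seq - content b | b <- boxes l].
Proof.
move=> Hl; have -> : [seq - content b | b <- boxes l] =
    [seq content b | b <- [seq (b.2, b.1) | b <- boxes l]].
  by rewrite -map_comp; apply/eq_map => b; rewrite /= content_swap.
exact/perm_map/perm_boxes_conj_part.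
Qed.

Lemma sorted_contents_conj_part (l : seq nat) : sorted geq l ->
  sorted_contents (conj_part l) = [seq - c | c <- rev (sorted_contents l)].
Proof.
move=> Hl; rewrite /sorted_contents -sort_ge_opp -map_comp.
exact/(perm_sortP ge_total ge_trans ge_anti)/perm_contents_conj_part.
Qed.

Lemma cont_conj_part (l : seq nat) i : sorted geq l -> (0 < i <= sumn l)%N ->
  cont (conj_part l) i = - cont l ((sumn l).+1 - i)%N.
Proof.
move=> Hl Hi; rewrite /cont sorted_contents_conj_part //.
rewrite (nth_map 0) ?size_rev ?size_sorted_contents; last lia.
rewrite nth_rev ?size_sorted_contents; last lia.
by congr (- nth _ _ _); lia.
Qed.

End Contents.

Theorem mainTheorem1 (n : nat) (l : seq nat) :
  is_partition n l ->
  forall i j : nat,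
    in_board n (conj_part l) (i, j) =
    [&& 1 <= i <= n, 1 <= j <= n & ~~ in_board_x1 n l (n.+1 - i, n.+1 - j)].
Proof.
case/and3P=> Hl _ /eqP <- i j; rewrite /in_board /in_board_x1 /=.
case Hi: (1 <= i <= sumn l) => //=; case Hj: (1 <= j <= sumn l) => //=.
have -> : 1 <= (sumn l).+1 - i <= sumn l by lia.
have -> : 1 <= (sumn l).+1 - j <= sumn l by lia.
rewrite cont_conj_part //= -ltNge; lia.
Qed.
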